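(* Let $g$ be a smooth function of one variable and consider, on the loop space of smooth maps $u:S^1\to\mathbb{R}$, the Poisson bivectors of hydrodynamic type $\omega_1=\delta'(x-y)$ and $\omega_2=g(u)\delta'(x-y)+\frac12 g'(u)u_x\delta(x-y)$. If the pencil $\omega_2-\lambda\omega_1$ is exact, i.e. there exists a local evolutionary vector field $X$ with $\mathrm{Lie}_X\omega_1=0$ and $\mathrm{Lie}_X\omega_2=\omega_1$, then there are constants $a,b$ such that $g(u)=au+b$, i.e. the pencil has the form $$(au+b)\delta'(x-y)+\frac12 a u_x\delta(x-y)-\lambda\delta'(x-y).$$
   Context: Scalar case ($u$ a single function, periodic in $x$). A local evolutionary vector field is $X=\sum_{s\ge0}\partial_x^s\xi\,\frac{\partial}{\partial u_{(s)}}$ with $\xi$ a differential polynomial in $u$. The Lie derivative of a local bivector with respect to $X$ is the Schouten bracket with $X$ (for $\omega_1=\delta'$ and $X$ with characteristic $\xi$, $\mathrm{Lie}_X\omega_1$ is the operator $-\xi_*\circ\partial_x-\partial_x\circ\xi_*^\dagger$, where $\xi_*=\sum_k\frac{\partial\xi}{\partial u_{(k)}}\partial_x^k$ is the Fréchet derivative and $\dagger$ the formal adjoint, with an operator $\sum_t a_t\partial_x^t$ identified with the bivector $\sum_t a_t\delta^{(t)}(x-y)$). Exactness of a pencil $\omega_2-\lambda\omega_1$: there is a vector field $X$ with $\mathrm{Lie}_X\omega_2=\omega_1\neq0$ and $\mathrm{Lie}_X\omega_1=0$. *)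

From Stdlib Require Import Reals List.
From Coquelicot Require Import Coquelicot.
Open Scope R_scope.

(** * Jet space of a scalar field u.
    A jet point [j : jet] assigns to each k the value of u_(k) (j 0 = u, j 1 = u_x, ...).
    A differential function is a real function on jet space. *)
Definition jet := nat -> R.
Definition dfun := jet -> R.

Definition pder (k : nat) (f : dfun) : dfun := fun j =>
  Derive (fun t => f (fun i => if Nat.eqb i k then j i + t else j i)) 0.

(** total x-derivative  d_x f = sum_k u_(k+1) df/du_(k)  (directional derivative
    along the shift direction of the jet) *)
Definition tder (f : dfun) : dfun := fun j =>
  Derive (fun t => f (fun i => j i + t * j (S i))) 0.

Fixpoint tder_n (n : nat) (f : dfun) : dfun :=
  match n with O => f | S n => tder (tder_n n f) end.

Definition smooth (f : R -> R) : Prop := forall n x, ex_derive (Derive_n f n) x.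

(** * Differential polynomials:  finite sums  c(u) * u_(1)^e1 * u_(2)^e2 * ...
    with smooth coefficients c; a term is a pair (c, [e1; e2; ...]). *)
Definition dpoly := list ((R -> R) * list nat).

Fixpoint monom_from (e : list nat) (k : nat) (j : jet) : R :=
  match e with nil => 1 | m :: e' => j k ^ m * monom_from e' (S k) j end.

Definition dp_eval (xi : dpoly) : dfun := fun j =>
  fold_right (fun p acc => fst p (j O) * monom_from (snd p) 1%nat j + acc) 0 xi.

Definition is_dpoly (xi : dpoly) : Prop := List.Forall (fun p => smooth (fst p)) xi.

Definition dp_order (xi : dpoly) : nat :=
  fold_right (fun p m => Nat.max (length (snd p)) m) O xi.

(** * Scalar differential operators  sum_t a_t d_x^t, stored as the list
    [a_0; a_1; ...] of coefficients; identified with the bivector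
    sum_t a_t delta^(t)(x-y). *)
Definition op := list dfun.
Definition coef (A : op) (t : nat) : dfun := nth t A (fun _ => 0).

Fixpoint rsum (n : nat) (f : nat -> R) : R :=
  match n with O => 0 | S n => rsum n f + f n end.

Fixpoint binom (n k : nat) : nat :=
  match n, k with
  | _, O => 1%nat
  | O, S _ => 0%nat
  | S n', S k' => (binom n' k' + binom n' k)%nat
  end.

Definition op_add (A B : op) : op :=
  map (fun s => fun j => coef A s j + coef B s j) (seq 0 (Nat.max (length A) (length B))).
Definition op_opp (A : op) : op := map (fun a => fun j => - a j) A.
Definition op_sub (A B : op) : op := op_add A (op_opp B).

(** composition:  a d^k o b d^l = sum_i C(k,i) a d_x^i(b) d^(k-i+l) *)
Definition op_comp (A B : op) : op :=
  map (fun s => fun j =>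
         rsum (length A) (fun k => rsum (length B) (fun l => rsum (S k) (fun i =>
           if Nat.eqb (k - i + l) s
           then INR (binom k i) * coef A k j * tder_n i (coef B l) j
           else 0))))
      (seq 0 (length A + length B)).

(** formal adjoint:  (sum_k a_k d^k)^dagger = sum_k (-d)^k o a_k *)
Definition op_adj (A : op) : op :=
  map (fun s => fun j =>
         rsum (length A) (fun k =>
           if Nat.leb s k
           then (-1) ^ k * INR (binom k s) * tder_n (k - s) (coef A k) j
           else 0))
      (seq 0 (length A)).

Definition frechet (xi : dpoly) : op :=
  map (fun k => pder k (dp_eval xi)) (seq 0 (S (dp_order xi))).

(** action of the evolutionary vector field X = sum_s d_x^s(xi) d/du_(s)
    on a differential function *)
Definition evder (xi : dpoly) (f : dfun) : dfun := fun j =>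
  Derive (fun t => f (fun k => j k + t * tder_n k (dp_eval xi) j)) 0.

(** Lie derivative of a local bivector P along X (Schouten bracket):
    Lie_X P = X(P) - xi_* o P - P o xi_*^dagger
    (for P = d_x this is  - xi_* o d_x - d_x o xi_*^dagger). *)
Definition lie (xi : dpoly) (P : op) : op :=
  op_sub (op_sub (map (evder xi) P) (op_comp (frechet xi) P))
         (op_comp P (op_adj (frechet xi))).

Definition op_eq (A B : op) : Prop := forall t j, coef A t j = coef B t j.

Definition omega1 : op := (fun _ => 0) :: (fun _ => 1) :: nil.

Definition omega2 (g : R -> R) : op :=
  (fun j => / 2 * Derive g (j O) * j 1%nat) :: (fun j => g (j O)) :: nil.

(* Evaluate everything at a constant jet [u_(0) = u, u_(k) = 0 for k > 0]: there all total
   derivatives vanish, so the coefficient of delta' in Lie_X (f(u) delta' + ...) reduces to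
   f'(u) c(u) - 2 f(u) c'(u), where c(u) is the characteristic xi at the constant jet.
   For omega_1 (f = 1) this gives c' = 0, and then for omega_2 (f = g) it gives g' c = 1.
   Hence c, and with it g' = 1/c, is constant. *)
From Stdlib Require Import Reals List Lra Lia FunctionalExtensionality.
From Coquelicot Require Import Coquelicot.
Open Scope R_scope.

Lemma coef_nil t j : coef nil t j = 0.
Proof. now destruct t. Qed.

Lemma coef_overflow A s j : (length A <= s)%nat -> coef A s j = 0.
Proof. intros H; unfold coef; now rewrite nth_overflow. Qed.

Lemma nth_map_seq0 (f : nat -> dfun) n s d : (s < n)%nat ->
  nth s (map f (seq 0 n)) d = f s.
Proof.
  intros H. rewrite nth_indep with (d' := f 0%nat) by (rewrite length_map, length_seq; lia).
  now rewrite map_nth, seq_nth.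
Qed.

Lemma coef_add A B s j : coef (op_add A B) s j = coef A s j + coef B s j.
Proof.
  destruct (Nat.lt_ge_cases s (Nat.max (length A) (length B))) as [H|H].
  - unfold op_add, coef at 1. now rewrite nth_map_seq0.
  - rewrite (coef_overflow A), (coef_overflow B) by lia.
    unfold coef, op_add. rewrite nth_overflow by (rewrite length_map, length_seq; lia). lra.
Qed.

Lemma coef_opp A s j : coef (op_opp A) s j = - coef A s j.
Proof.
  unfold coef, op_opp. revert s. induction A as [|a A IH]; intros [|s]; simpl; try ring.
  apply IH.
Qed.

Lemma coef_sub A B s j : coef (op_sub A B) s j = coef A s j - coef B s j.
Proof. unfold op_sub. rewrite coef_add, coef_opp. ring. Qed.

Lemma rsum_pad n N f : (forall i, (n <= i)%nat -> f i = 0) -> (n <= N)%nat ->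
  rsum n f = rsum N f.
Proof.
  intros Hf HN. induction N.
  - now replace n with 0%nat by lia.
  - destruct (Nat.eq_dec n (S N)) as [->|Hn]; [reflexivity|].
    simpl. rewrite <- IHN, (Hf N) by lia. ring.
Qed.

Lemma rsum_eq_support n m f : (forall i, (m <= i)%nat -> f i = 0) ->
  (forall i, (n <= i)%nat -> f i = 0) -> rsum n f = rsum m f.
Proof.
  intros Hm Hn.
  now rewrite (rsum_pad n (Nat.max n m)), (rsum_pad m (Nat.max n m)) by (auto; lia).
Qed.

Lemma rsum_eq0 n f : (forall i, f i = 0) -> rsum n f = 0.
Proof. intros H; induction n; simpl; [reflexivity|rewrite IHn, H; ring]. Qed.

Definition const_jet (u : R) : jet := fun i => match i with O => u | _ => 0 end.

Lemma tder_nS_const_jet n f u : tder_n (S n) f (const_jet u) = 0.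
Proof.
  simpl; unfold tder.
  rewrite (Derive_ext _ (fun _ => tder_n n f (const_jet u))) by
    (intros t; f_equal; extensionality i; destruct i; simpl; ring).
  apply Derive_const.
Qed.

Section ConstantJet.

Variable u : R.
Notation j := (const_jet u).

Lemma coef1_comp_const_jet A B : (1 < length A + length B)%nat ->
  coef (op_comp A B) 1 j = coef A 0 j * coef B 1 j + coef A 1 j * coef B 0 j.
Proof.
  intros Hl. unfold op_comp, coef at 1. rewrite nth_map_seq0 by exact Hl.
  set (G := fun k l => if Nat.eqb (k + l) 1 then coef A k j * coef B l j else 0).
  assert (HG : forall k l, (1 < k + l)%nat -> G k l = 0).
  { intros k l Hkl. unfold G. destruct (Nat.eqb_spec (k + l) 1); [lia|reflexivity]. }
  transitivity (rsum (length A) (fun k => rsum (length B) (fun l => G k l))).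
  - f_equal. extensionality k. f_equal. extensionality l.
    rewrite (rsum_eq_support (S k) 1).
    + simpl. rewrite Nat.sub_0_r. unfold G. destruct (Nat.eqb (k + l) 1); [|ring].
      replace (binom k 0) with 1%nat by (now destruct k). simpl. ring.
    + intros [|i] Hi; [lia|]. rewrite tder_nS_const_jet. destruct (Nat.eqb _ _); ring.
    + intros [|i] Hi; [lia|]. rewrite tder_nS_const_jet. destruct (Nat.eqb _ _); ring.
  - rewrite (rsum_eq_support (length A) 2).
    + assert (HB : forall k, rsum (length B) (G k) = rsum 2 (G k)).
      { intros k. apply rsum_eq_support; intros l Hlb; [apply HG; lia|].
        unfold G. rewrite (coef_overflow B l) by lia. destruct (Nat.eqb _ _); ring. }
      simpl. rewrite !HB. unfold G; simpl. ring.
    + intros k Hk. apply rsum_eq0. intros l. apply HG. lia.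
    + intros k Hk. apply rsum_eq0. intros l. unfold G. rewrite coef_overflow by lia.
      destruct (Nat.eqb _ _); ring.
Qed.

Lemma coef0_adj_const_jet A : (0 < length A)%nat -> coef (op_adj A) 0 j = coef A 0 j.
Proof.
  intros Hl. unfold op_adj, coef at 1. rewrite nth_map_seq0 by exact Hl.
  rewrite (rsum_eq_support _ 1); [simpl; ring| |];
    intros [|i] Hi; try lia; simpl Nat.leb; cbv iota;
    rewrite Nat.sub_0_r, tder_nS_const_jet; ring.
Qed.

Lemma coef0_frechet_const_jet xi :
  coef (frechet xi) 0 j = Derive (fun t => dp_eval xi (const_jet (u + t))) 0.
Proof.
  unfold coef, frechet. rewrite nth_map_seq0 by lia. unfold pder.
  apply Derive_ext. intros t. f_equal. extensionality i. now destruct i.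
Qed.

Lemma evder_const_jet xi (f : R -> R) : ex_derive f u ->
  evder xi (fun j => f (j O)) j = Derive f u * dp_eval xi j.
Proof.
  intros Hf. unfold evder. simpl. set (c := dp_eval xi j).
  rewrite (Derive_comp f (fun t => u + t * c)) by (rewrite ?Rmult_0_l, ?Rplus_0_r; auto_derive; auto).
  replace (u + 0 * c) with u by ring.
  replace (Derive (fun t => u + t * c) 0) with c; [ring|].
  symmetry. apply is_derive_unique. auto_derive; auto; ring.
Qed.

Lemma coef1_lie_const_jet xi (f : R -> R) (p0 : dfun) : ex_derive f u -> p0 j = 0 ->
  coef (lie xi (p0 :: (fun j => f (j O)) :: nil)) 1 j =
  Derive f u * dp_eval xi j
  - 2 * f u * Derive (fun t => dp_eval xi (const_jet (u + t))) 0.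
Proof.
  intros Hf Hp0. unfold lie. rewrite !coef_sub.
  assert (Hlen : (0 < length (frechet xi))%nat)
    by (unfold frechet; rewrite length_map, length_seq; lia).
  rewrite !coef1_comp_const_jet by (simpl; lia).
  rewrite coef0_adj_const_jet, coef0_frechet_const_jet by exact Hlen.
  change (coef (map (evder xi) _) 1) with (evder xi (fun j => f (j O))).
  rewrite evder_const_jet by exact Hf. cbn [coef nth]. rewrite Hp0. change (j O) with u. ring.
Qed.

End ConstantJet.

Lemma constant_of_is_derive0 (f : R -> R) : (forall x, is_derive f x 0) -> forall x, f x = f 0.
Proof.
  intros H x. destruct (Rtotal_order x 0) as [Hx|[->|Hx]].
  - now apply eq_is_derive.
  - reflexivity.
  - symmetry. now apply eq_is_derive.
Qed.

Lemma affine_of_Derive_mul_const (g c : R -> R) :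
  (forall x, ex_derive g x) -> (forall x, ex_derive (Derive g) x) ->
  (forall x, Derive (fun t => c (x + t)) 0 = 0) -> (forall x, Derive g x * c x = 1) ->
  exists a b : R, forall x, g x = a * x + b.
Proof.
  intros Hg Hg' Hc Hgc.
  assert (Hg'0 : forall x, Derive g x <> 0).
  { intros x H. specialize (Hgc x). rewrite H in Hgc. lra. }
  assert (Hc_inv : forall x, c x = / Derive g x).
  { intros x. rewrite <- (Rmult_1_l (/ _)), <- (Hgc x). field. apply Hg'0. }
  assert (Hc_ex : forall x, ex_derive c x).
  { intros x. apply (ex_derive_ext (fun y => / Derive g y)); [intros; now rewrite Hc_inv|].
    now apply ex_derive_inv. }
  assert (Hc_shift : forall x, Derive (fun t => c (x + t)) 0 = Derive c x).
  { intros x. rewrite (Derive_comp c (fun t => x + t)), Rplus_0_r;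
      [| rewrite Rplus_0_r; apply Hc_ex | auto_derive; auto].
    replace (Derive (fun t => x + t) 0) with 1; [ring|].
    symmetry; apply is_derive_unique; auto_derive; auto; ring. }
  assert (Hc_const : forall x, c x = c 0).
  { apply constant_of_is_derive0. intros x.
    rewrite <- (Hc x), Hc_shift. apply Derive_correct, Hc_ex. }
  exists (/ c 0), (g 0).
  assert (Hslope : forall x, Derive g x = / c 0).
  { intros x. now rewrite <- (Hc_const x), Hc_inv, Rinv_inv. }
  assert (Hline : forall y, is_derive (fun y => g y - / c 0 * y) y 0).
  { intros y. auto_derive; [apply Hg|]. rewrite Hslope. ring. }
  intros x. pose proof (constant_of_is_derive0 _ Hline x) as Hx. simpl in Hx. lra.
Qed.

Theorem lemma15 (g : R -> R) (hg : smooth g) (xi : dpoly) (hxi : is_dpoly xi)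
  (h1 : op_eq (lie xi omega1) nil)
  (h2 : op_eq (lie xi (omega2 g)) omega1) :
  exists a b : R, forall u : R, g u = a * u + b.
Proof.
  assert (Hc : forall u, Derive (fun t => dp_eval xi (const_jet (u + t))) 0 = 0).
  { intros u. specialize (h1 1%nat (const_jet u)). rewrite coef_nil in h1.
    change omega1 with ((fun _ => 0) :: (fun j : jet => (fun _ => 1) (j O)) :: nil) in h1.
    rewrite coef1_lie_const_jet, Derive_const in h1 by (reflexivity || apply ex_derive_const).
    lra. }
  apply (affine_of_Derive_mul_const g (fun v => dp_eval xi (const_jet v)) (hg 0%nat) (hg 1%nat) Hc).
  intros u. specialize (h2 1%nat (const_jet u)). unfold omega2 in h2.
  rewrite coef1_lie_const_jet, Hc in h2 by (exact (hg 0%nat u) || (cbn; ring)).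
  cbn in h2. lra.
Qed.
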